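(* Let $\mathcal{C}$ be a category and $\mathcal{W}$ a class of morphisms of $\mathcal{C}$ satisfying (L0) and (L1) below. Let $\mathcal{W}_L$ be the class of morphisms of $\mathcal{C}$ generated under composition by $\mathcal{W}$ together with all split monomorphisms of $\mathcal{C}$. Then for every $w'\in\mathcal{W}_L$ there exists a morphism $k$ of $\mathcal{C}$ with $\mathrm{dom}(k)=\mathrm{cod}(w')$ such that $kw'\in\mathcal{W}$. (L0): $\mathcal{W}$ contains all identity morphisms and is closed under composition. (L1): For every $w\in\mathcal{W}$ and every morphism $f$ with $\mathrm{dom}(f)=\mathrm{dom}(w)$ there exist $w'\in\mathcal{W}$ and a morphism $f'$ with $\mathrm{dom}(f')=\mathrm{cod}(w)$, $\mathrm{dom}(w')=\mathrm{cod}(f)$ and $\mathrm{cod}(f')=\mathrm{cod}(w')$ such that $w'f=f'w$.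
   Context: A split monomorphism is a morphism $m$ that has a left inverse, i.e. a morphism $e$ with $em=\mathrm{id}_{\mathrm{dom}(m)}$. *)

Record Category := {
  Obj :> Type;
  Hom : Obj -> Obj -> Type;
  idm : forall a : Obj, Hom a a;
  comp : forall a b c : Obj, Hom b c -> Hom a b -> Hom a c;
    (* comp g f = g o f, i.e. "g f" in the paper *)
  comp_assoc : forall a b c d (h : Hom c d) (g : Hom b c) (f : Hom a b),
      comp a c d h (comp a b c g f) = comp a b d (comp b c d h g) f;
  comp_id_l : forall a b (f : Hom a b), comp a b b (idm b) f = f;
  comp_id_r : forall a b (f : Hom a b), comp a a b f (idm a) = f
}.

Arguments Hom {C} : rename.
Arguments idm {C} a : rename.
Arguments comp {C a b c} : rename.

Definition MorClass (C : Category) := forall a b : C, Hom a b -> Prop.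

Definition split_mono {C : Category} {a b : C} (m : Hom a b) : Prop :=
  exists e : Hom b a, comp e m = idm a.

Definition L0 {C : Category} (W : MorClass C) : Prop :=
  (forall a : C, W a a (idm a)) /\
  (forall (a b c : C) (g : Hom b c) (f : Hom a b),
      W b c g -> W a b f -> W a c (comp g f)).

Definition L1 {C : Category} (W : MorClass C) : Prop :=
  forall (a b c : C) (w : Hom a b) (f : Hom a c),
    W a b w ->
    exists (d : C) (w' : Hom c d) (f' : Hom b d),
      W c d w' /\ comp w' f = comp f' w.

Inductive WL {C : Category} (W : MorClass C) : MorClass C :=
  | WL_W : forall (a b : C) (f : Hom a b), W a b f -> WL W a b f
  | WL_split : forall (a b : C) (f : Hom a b), split_mono f -> WL W a b f
  | WL_comp : forall (a b c : C) (g : Hom b c) (f : Hom a b),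
      WL W b c g -> WL W a b f -> WL W a c (comp g f).

(** If [k2 g] and [k1 f] lie in [W], (L1) applied to [k2 g] and [k1] gives
    [u k1 = h (k2 g)] with [u] in [W]; then [(h k2) (g f) = u (k1 f)] is in [W]
    by (L0).  So the morphisms that can be completed into [W] by a left factor
    contain [W] and the split monos and are closed under composition. *)


Section LeftCompletion.

Variables (C : Category) (W : MorClass C).

Definition left_completable : MorClass C :=
  fun a b f => exists (c : C) (k : Hom b c), W a c (comp k f).

Lemma left_completable_W (a b : C) (f : Hom a b) :
  W a b f -> left_completable a b f.
Proof.
  intros Hf. exists b, (idm b). rewrite comp_id_l. exact Hf.
Qed.

Lemma left_completable_split_mono (a b : C) (m : Hom a b) :
  (forall x : C, W x x (idm x)) -> split_mono m -> left_completable a b m.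
Proof.
  intros Hid [e He]. exists a, e. rewrite He. apply Hid.
Qed.

Lemma left_completable_comp (a b c : C) (g : Hom b c) (f : Hom a b) :
  L0 W -> L1 W ->
  left_completable b c g -> left_completable a b f ->
  left_completable a c (comp g f).
Proof.
  intros [_ Hcomp] HL1 [c2 [k2 Hk2]] [c1 [k1 Hk1]].
  destruct (HL1 _ _ _ (comp k2 g) k1 Hk2) as [d [u [h [Hu Hsq]]]].
  exists d, (comp h k2).
  assert (E : comp (comp h k2) (comp g f) = comp u (comp k1 f)).
  { rewrite (comp_assoc _ _ _ _ _ u k1 f), Hsq, !comp_assoc. reflexivity. }
  rewrite E. apply Hcomp; assumption.
Qed.

Lemma WL_left_completable (a b : C) (f : Hom a b) :
  L0 W -> L1 W -> WL W a b f -> left_completable a b f.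
Proof.
  intros HL0 HL1 H.
  induction H as [a b f Hf | a b f Hf | a b c g f _ IHg _ IHf].
  - now apply left_completable_W.
  - now apply left_completable_split_mono; [apply HL0 |].
  - now apply left_completable_comp.
Qed.

End LeftCompletion.

Theorem mainTheorem1 (C : Category) (W : MorClass C) :
  L0 W -> L1 W ->
  forall (a b : C) (w' : Hom a b), WL W a b w' ->
    exists (c : C) (k : Hom b c), W a c (comp k w').
Proof.
  intros HL0 HL1 a b w' Hw'.
  exact (WL_left_completable C W a b w' HL0 HL1 Hw').
Qed.
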